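(* Let $h,k\ge 2$ be integers and $w=a^hb^k$. For $n\ge1$ let $S_n = a^h(a^{2h}b^{2k})(aba^{h-1}b^{k-1})^{n}(a^{2h}b^{2k})b^k$. Then every $S_n$ belongs to $L^{\epsilon}_{\vdash_{\{w\}}}$ and for all $1\le i<j$ we have $S_i \not\vdash^*_{\{w\}} S_j$; in particular $\vdash^*_{\{w\}}$ is not a well quasi-order on $L^{\epsilon}_{\vdash_{\{w\}}}$.
   Context: For words $u,v$, the shuffle $u \sqcup\!\sqcup v$ is the set of all words $u_1v_1\cdots u_kv_k$ with $k\ge 1$, $u=u_1\cdots u_k$, $v=v_1\cdots v_k$ (pieces possibly empty). For a finite set $I$ of words, $v \vdash_I w$ means $w \in v \sqcup\!\sqcup u$ for some $u\in I$; $\vdash_I^*$ is its reflexive-transitive closure and $L^{\epsilon}_{\vdash_I}=\{w : \epsilon \vdash_I^* w\}$. A quasi-order $\le$ on $S$ is a well quasi-order iff every infinite sequence $s_1,s_2,\dots$ in $S$ has $i<j$ with $s_i\le s_j$. *)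

From HB Require Import structures.
From mathcomp Require Import all_boot.
From Stdlib Require Import Relations.Relation_Operators.
Set Implicit Arguments. Unset Strict Implicit. Unset Printing Implicit Defensive.

Inductive letter := la | lb.
Definition letter_eqb (x y : letter) : bool := match x, y with la, la | lb, lb => true | _, _ => false end.
Lemma letter_eqP : Equality.axiom letter_eqb. Proof. by case; case; constructor. Qed.
HB.instance Definition _ := hasDecEq.Build letter letter_eqP.
Definition word := seq letter.

(* w is in the shuffle of u and v: w = u_1 v_1 ... u_k v_k with k >= 1,
   u = u_1 ... u_k, v = v_1 ... v_k (pieces possibly empty).
   The pieces are recorded as the list p of pairs (u_i, v_i). *)
Definition in_shuffle (T : Type) (u v w : seq T) : Prop :=
  exists p : seq (seq T * seq T),
    0 < size p /\
    u = flatten (map fst p) /\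
    v = flatten (map snd p) /\
    w = flatten (map (fun x => x.1 ++ x.2) p).

Definition derives (I : seq word) (v w : word) : Prop :=
  exists u, u \in I /\ in_shuffle v u w.

Definition derives_star (I : seq word) : word -> word -> Prop :=
  clos_refl_trans word (derives I).

Definition L_eps (I : seq word) (w : word) : Prop := derives_star I [::] w.

Definition wqo_on (X : Type) (S : X -> Prop) (R : X -> X -> Prop) : Prop :=
  (forall x, S x -> R x x) /\
  (forall x y z, S x -> S y -> S z -> R x y -> R y z -> R x z) /\
  (forall s : nat -> X, (forall n, S (s n)) ->
     exists i j, (i < j)%N /\ R (s i) (s j)).

Definition pw (h k : nat) : word := nseq h la ++ nseq k lb.

Definition Sn (h k n : nat) : word :=
  nseq h la ++ (nseq (2 * h) la ++ nseq (2 * k) lb) ++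
  flatten (nseq n ([:: la; lb] ++ nseq h.-1 la ++ nseq k.-1 lb)) ++
  (nseq (2 * h) la ++ nseq (2 * k) lb) ++ nseq k lb.

From mathcomp Require Import all_boot zify.
From Stdlib Require Import Relations.Relation_Operators.
Set Implicit Arguments. Unset Strict Implicit. Unset Printing Implicit Defensive.

(* Whenever v |-*_{w} x, x is a shuffle of v with a word z obtained by
   shuffling copies of w = a^h b^k.  Such z are "admissible": every a of z is
   followed by at least k b's, and the weight k|p|_a - h|p|_b of every prefix
   p of z is nonnegative; both properties hold for w and survive shuffling.

   Along S_n the prefix weight reaches 3hk exactly twice: after the leading
   a^{3h} and just before the trailing b^{3k}.  Shuffling a nonnegative-weight
   z into S_i can only raise prefix weights, so in S_j = S_i ⧢ z these two
   peaks must be aligned, which confines z to the middle: the blocks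
   (a b a^{h-1} b^{k-1})^j must be a shuffle of (a b a^{h-1} b^{k-1})^i with z.
   The a's of the last block are followed by only k-1 b's, so they cannot come
   from z; hence the last blocks of both words match, and peeling them off
   reduces (i, j) to (i-1, j-1), so i < j is impossible. *)

Section Shuffle.
Variable T : Type.
Implicit Types (c : T) (s u v x y z : seq T).

Lemma cat_eq_cat x1 x2 y1 y2 : x1 ++ x2 = y1 ++ y2 ->
  (exists2 s, x1 = y1 ++ s & y2 = s ++ x2) \/ (exists2 s, y1 = x1 ++ s & x2 = s ++ y2).
Proof.
elim: x1 y1 => [|c x1 IH] [|d y1] /= E; [by right; exists [::] | by right; exists (d :: y1)|..].
  by left; exists (c :: x1).
by case: E => <- /IH [[s -> ->] | [s -> ->]]; [left | right]; exists s.
Qed.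

Lemma catsI s : injective (cat s).
Proof. by elim: s => // c s IH x y [/IH]. Qed.

Lemma catIs s x y : x ++ s = y ++ s -> x = y.
Proof. by move/(congr1 rev); rewrite !rev_cat => /catsI/(congr1 rev); rewrite !revK. Qed.

Lemma take_nseq_minn i j (x : T) : take i (nseq j x) = nseq (minn i j) x.
Proof. by elim: j i => [|j IH] [|i] //=; rewrite ?minn0 // minnSS IH. Qed.

Inductive shuffle : seq T -> seq T -> seq T -> Prop :=
| shuffle_nil : shuffle [::] [::] [::]
| shuffle_consl c u v x : shuffle u v x -> shuffle (c :: u) v (c :: x)
| shuffle_consr c u v x : shuffle u v x -> shuffle u (c :: v) (c :: x).

Lemma shuffle_count (P : pred T) u v x :
  shuffle u v x -> count P x = count P u + count P v.
Proof. by elim=> //= c {}u {}v {}x _ ->; [rewrite addnA | rewrite addnCA]. Qed.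

Lemma shuffle_size u v x : shuffle u v x -> size x = size u + size v.
Proof. by rewrite -!count_predT; apply: shuffle_count. Qed.

Lemma shuffle_cons_inv u v c x : shuffle u v (c :: x) ->
  (exists2 u', u = c :: u' & shuffle u' v x) \/ (exists2 v', v = c :: v' & shuffle u v' x).
Proof. by move=> H; inversion H; subst; [left|right]; eexists. Qed.

Lemma shuffles0 x : shuffle x [::] x.
Proof. by elim: x => [|c x IH]; constructor. Qed.

Lemma shuffles0_eq u x : shuffle u [::] x -> u = x.
Proof.
elim: x u => [|c x IH] u H.
  by apply: size0nil; have := shuffle_size H; rewrite addn0.
by case/shuffle_cons_inv: H => [[u' -> /IH ->] | [v' //]].
Qed.

Lemma shuffle_catl s u v x : shuffle u v x -> shuffle (s ++ u) v (s ++ x).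
Proof. by elim: s => //= c s IH /IH; apply: shuffle_consl. Qed.

Lemma shuffle_catr s u v x : shuffle u v x -> shuffle u (s ++ v) (s ++ x).
Proof. by elim: s => //= c s IH /IH; apply: shuffle_consr. Qed.

Lemma shuffle_split_output x1 x2 u v : shuffle u v (x1 ++ x2) ->
  exists u1 u2 v1 v2,
    [/\ u = u1 ++ u2, v = v1 ++ v2, shuffle u1 v1 x1 & shuffle u2 v2 x2].
Proof.
elim: x1 u v => [|c x1 IH] u v H.
  by exists [::], u, [::], v; split=> //; constructor.
case/shuffle_cons_inv: H => [[u' -> /IH] | [v' -> /IH]] [u1 [u2 [v1 [v2 [-> -> H1 H2]]]]].
  by exists (c :: u1), u2, v1, v2; split=> //; constructor.
by exists u1, u2, (c :: v1), v2; split=> //; constructor.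
Qed.

Lemma shuffle_split_left u1 u2 v x : shuffle (u1 ++ u2) v x ->
  exists x1 x2 v1 v2,
    [/\ x = x1 ++ x2, v = v1 ++ v2, shuffle u1 v1 x1 & shuffle u2 v2 x2].
Proof.
move E: (u1 ++ u2) => u12 H; elim: H u1 E => [|c u {}v {}x H IH|c u {}v {}x H IH] u1 E.
- by case: u1 u2 E => [|? ?] [|? ?] // _; exists [::], [::], [::], [::]; split=> //; constructor.
- case: u1 E => [|c' u1] /= E.
    by exists [::], (c :: x), [::], v; split=> //; [constructor | rewrite E; constructor].
  case: E => -> /IH [x1 [x2 [v1 [v2 [-> -> H1 H2]]]]].
  by exists (c :: x1), x2, v1, v2; split=> //; constructor.
- have [x1 [x2 [v1 [v2 [-> -> H1 H2]]]]] := IH _ E.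
  by exists (c :: x1), x2, (c :: v1), v2; split=> //; constructor.
Qed.

Lemma shuffle_assoc u v1 x v2 y :
  shuffle u v1 x -> shuffle x v2 y -> exists2 v, shuffle v1 v2 v & shuffle u v y.
Proof.
move=> H1 H2; elim: H2 u v1 H1 => [|c x' v2' y' _ IH|c x' v2' y' _ IH] u v1 H1.
- have /esym/eqP := shuffle_size H1; rewrite addn_eq0 => /andP[/eqP/size0nil-> /eqP/size0nil->].
  by exists [::]; constructor.
- case/shuffle_cons_inv: H1 => [[u' -> /IH [v Hv Hu]] | [v1' -> /IH [v Hv Hu]]].
    by exists v => //; constructor.
  by exists (c :: v); constructor.
- by have [v Hv Hu] := IH _ _ H1; exists (c :: v); constructor.
Qed.

Lemma in_shuffle_shuffle u v x : in_shuffle u v x -> shuffle u v x.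
Proof.
case=> p [_ [-> [-> ->]]]; elim: p => [|[p1 p2] p IH] /=; first by constructor.
by rewrite -catA; apply/shuffle_catl/shuffle_catr.
Qed.

End Shuffle.

(* The coercion is spelled out so that every letter count elaborates to the
   same term; otherwise lia sees [count_mem la s] built in two ways as two
   different atoms. *)
Notation na := (@count letter (@PredOfSimpl.coerce letter (pred1 la))).
Notation nb := (@count letter (@PredOfSimpl.coerce letter (pred1 lb))).

Lemma shuffle_count_ab (u v x : word) :
  shuffle u v x -> na x = na u + na v /\ nb x = nb u + nb v.
Proof. by move=> H; rewrite !(shuffle_count _ H). Qed.

Lemma size_count_ab (s : word) : size s = na s + nb s.
Proof. by elim: s => //= -[] s ->; rewrite /= ?addnS. Qed.

Lemma notin_a_nseq_b (s : word) : la \notin s -> s = nseq (size s) lb.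
Proof. by move=> nas; apply/all_pred1P/allP => -[] // las; rewrite las in nas. Qed.

Definition guarded (k : nat) (z : word) :=
  forall z1 z2, z = z1 ++ la :: z2 -> k <= nb z2.

Definition prefix_balanced (h k : nat) (z : word) :=
  forall z1 z2, z = z1 ++ z2 -> h * nb z1 <= k * na z1.

Definition admissible h k z := guarded k z /\ prefix_balanced h k z.

Lemma guarded_mem_suffix k z v : guarded k (z ++ v) -> la \in v -> k <= nb v.
Proof.
move=> gz vin; case/splitPr: vin gz => y y' gz; have := gz (z ++ y) y'.
by rewrite -catA count_cat /= => /(_ erefl); lia.
Qed.

Lemma guarded_shuffle k u v x :
  guarded k u -> guarded k v -> shuffle u v x -> guarded k x.
Proof.
move=> gu gv H x1 x2 Ex; rewrite {}Ex in H.
have [u1 [u2 [v1 [v2 [Eu Ev _ H2]]]]] := shuffle_split_output H.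
have [[u' Eu2 H'] | [v' Ev2 H']] := shuffle_cons_inv H2; subst.
  by have := gu _ _ erefl; rewrite (shuffle_count _ H'); lia.
by have := gv _ _ erefl; rewrite (shuffle_count _ H'); lia.
Qed.

Lemma prefix_balanced_shuffle h k u v x :
  prefix_balanced h k u -> prefix_balanced h k v -> shuffle u v x ->
  prefix_balanced h k x.
Proof.
move=> bu bv H x1 x2 Ex; rewrite {}Ex in H.
have [u1 [u2 [v1 [v2 [Eu Ev H1 _]]]]] := shuffle_split_output H.
have := bu _ _ Eu; have := bv _ _ Ev.
by rewrite !(shuffle_count _ H1) !mulnDr; lia.
Qed.

Lemma admissible_shuffle h k u v x :
  admissible h k u -> admissible h k v -> shuffle u v x -> admissible h k x.
Proof.
move=> [gu bu] [gv bv] H.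
by split; [apply: guarded_shuffle H | apply: prefix_balanced_shuffle H].
Qed.

Lemma admissible_nil h k : admissible h k [::].
Proof. by split=> -[|? ?] ? //= _; rewrite !muln0. Qed.

Lemma admissible_pw h k : admissible h k (pw h k).
Proof.
split=> z1 z2 /esym/cat_eq_cat [[s Ez1 Es] | [s Es Ez2]].
- by have := congr1 na Es; rewrite count_cat !count_nseq /=; lia.
- by have := congr1 nb Ez2; rewrite count_cat !count_nseq /=; lia.
- have := congr1 na Es; have := congr1 nb Es; rewrite Ez1.
  by rewrite !count_cat !count_nseq /=; nia.
- by have := congr1 nb Es; rewrite count_cat !count_nseq /=; lia.
Qed.

Lemma derives_star_shuffle h k (I : seq word) v x :
  {in I, forall u, admissible h k u} -> derives_star I v x ->
  exists2 z, admissible h k z & shuffle v z x.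
Proof.
move=> adm; elim=> [{}v {}x [u [/adm au /in_shuffle_shuffle H]] | {}v |
                    {}v y {}x _ [z1 a1 H1] _ [z2 a2 H2]].
- by exists u.
- by exists [::]; [apply: admissible_nil | apply: shuffles0].
- have [z Hz Hv] := shuffle_assoc H1 H2.
  by exists z => //; apply: admissible_shuffle Hz.
Qed.

Definition block h k : word := [:: la, lb & nseq h.-1 la ++ nseq k.-1 lb].
Definition blocks h k n : word := flatten (nseq n (block h k)).
Definition Sn_core h k n : word := nseq (2 * k) lb ++ blocks h k n ++ nseq (2 * h) la.

Lemma Sn_eq h k n : Sn h k n = nseq (3 * h) la ++ Sn_core h k n ++ nseq (3 * k) lb.
Proof.
have -> : 3 * h = h + 2 * h by lia.
have -> : 3 * k = 2 * k + k by lia.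
by rewrite /Sn /Sn_core /blocks /block !nseqD !catA.
Qed.

Lemma blocksS h k n : blocks h k n.+1 = blocks h k n ++ block h k.
Proof. by rewrite /blocks -addn1 nseqD flatten_cat /= cats0. Qed.

Lemma count_block h k : 0 < h -> 0 < k -> na (block h k) = h /\ nb (block h k) = k.
Proof. by move=> h0 k0; rewrite /block /= !count_cat !count_nseq /=; lia. Qed.

Lemma count_blocks h k n : 0 < h -> 0 < k ->
  na (blocks h k n) = n * h /\ nb (blocks h k n) = n * k.
Proof.
move=> h0 k0; have [Ba Bb] := count_block h0 k0.
by elim: n => [|n [IHa IHb]] //; rewrite blocksS !count_cat IHa IHb Ba Bb !mulSnr.
Qed.

Lemma blocks_prefix_bound h k n p q : 0 < h -> 0 < k -> p ++ q = blocks h k n ->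
  k * na p <= h * nb p + h * k.
Proof.
move=> h0 k0; have [Ba Bb] := count_block h0 k0.
elim: n p q => [|n IH] p q; first by case: p => //= _; lia.
rewrite (_ : blocks h k n.+1 = block h k ++ blocks h k n) // => /cat_eq_cat [[s -> /esym/IH] | [s Eb _]].
  by rewrite !count_cat Ba Bb; nia.
by have := congr1 na Eb; rewrite count_cat Ba; nia.
Qed.

Lemma Sn_prefix_peak h k n p q : 0 < h -> 0 < k -> p ++ q = Sn h k n ->
  h * nb p + 3 * h * k <= k * na p -> size p = 3 * h \/ size q = 3 * k.
Proof.
move=> h0 k0 Epq.
have -> : size q = size (Sn h k n) - size p by rewrite -Epq size_cat addKn.
have -> : p = take (size p) (Sn h k n) by rewrite -Epq take_size_cat.
move: (size p) => m; have [Ba Bb] := count_blocks n h0 k0.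
have Sb : size (blocks h k n) = n * (h + k) by rewrite size_count_ab Ba Bb mulnDr.
rewrite Sn_eq /Sn_core -!catA !take_cat !size_cat !size_nseq Sb.
case: ifP => [lt1 | _].
  by rewrite take_nseq_minn !count_nseq size_nseq /=; nia.
case: ifP => [lt2 | _].
  by rewrite take_nseq_minn !count_cat !count_nseq !size_cat !size_nseq /=; nia.
case: ifP => [lt3 | _].
  have := blocks_prefix_bound h0 k0 (cat_take_drop (m - 3 * h - 2 * k) (blocks h k n)).
  by rewrite !count_cat !count_nseq /=; nia.
case: ifP => [lt4 | _].
  by rewrite take_nseq_minn !count_cat !count_nseq Ba Bb /=; nia.
by rewrite take_nseq_minn !count_cat !count_nseq Ba Bb !size_cat !size_nseq Sb /=; nia.
Qed.

Lemma shuffle_strip_b_prefix h k n u z x : 0 < h -> prefix_balanced h k z ->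
  shuffle (nseq n lb ++ u) z (nseq n lb ++ x) -> shuffle u z x.
Proof.
move=> h0 bz /shuffle_split_output [u1 [u2 [z1 [z2 [Eu Ez H1 H2]]]]].
have z1_nil : z1 = [::].
  have := bz _ _ Ez; have [] := shuffle_count_ab H1; rewrite !count_nseq /=.
  by move=> az1 _ bz1; apply: size0nil; rewrite size_count_ab; nia.
rewrite {}z1_nil /= in Ez H1; rewrite {}Ez.
by move/shuffles0_eq: H1 Eu => -> /catsI ->.
Qed.

Lemma shuffle_with_nseq_b u p q r :
  shuffle u (nseq r lb) (nseq p la ++ nseq q lb) -> u = nseq p la ++ nseq (q - r) lb.
Proof.
elim: p u => [|p IH] u /= H.
  have := shuffle_size H; have [] := shuffle_count_ab H; rewrite !count_nseq !size_nseq /=.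
  rewrite !mul0n addn0 => /esym/count_memPn/notin_a_nseq_b Eu _ Sq.
  by rewrite Eu Sq addnK.
have [[u' -> /IH ->] // | [v' Ev _]] := shuffle_cons_inv H.
by case: r {IH H} Ev.
Qed.

Lemma shuffle_guarded_tail k p q x u z : q < k -> guarded k z ->
  shuffle u z (x ++ nseq p la ++ nseq q lb) ->
  exists u1 z1 r, [/\ r <= q, u = u1 ++ nseq p la ++ nseq (q - r) lb,
                      z = z1 ++ nseq r lb & shuffle u1 z1 x].
Proof.
move=> qk gz /shuffle_split_output [u1 [u2 [z1 [v [-> Ez H1 H2]]]]].
rewrite {}Ez in gz *.
have /notin_a_nseq_b Ev : la \notin v.
  apply/negP => /(guarded_mem_suffix gz).
  by have [_] := shuffle_count_ab H2; rewrite count_cat !count_nseq /=; lia.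
rewrite Ev in H2; exists u1, z1, (size v); split => //; last by rewrite -Ev.
- by have [_] := shuffle_count_ab H2; rewrite count_cat !count_nseq /=; lia.
- by rewrite (shuffle_with_nseq_b H2).
Qed.

Lemma cat_a_nseq_b_inj (y y' : word) m n :
  y ++ la :: nseq m lb = y' ++ la :: nseq n lb -> y = y' /\ m = n.
Proof.
move/(congr1 rev); rewrite !rev_cat /= !rev_cons !rev_nseq -!cats1 -!catA /=.
elim: m n => [|m IH] [|n] //= [].
- by move/(congr1 rev); rewrite !revK.
- by case/IH => -> ->.
Qed.

Lemma shuffle_blocks_last h k i j z : 2 <= h -> 2 <= k -> guarded k z ->
  shuffle (blocks h k i) z (blocks h k j.+1) ->
  exists2 i', i = i'.+1 & shuffle (blocks h k i') z (blocks h k j).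
Proof.
move=> h2 k2 gz.
have split_last_a (y : word) m :
    y ++ nseq h.-1 la ++ nseq m lb = (y ++ nseq h.-2 la) ++ la :: nseq m lb.
  by case: h h2 => [|[|h']] // _; rewrite -[h'.+2.-2]/h' -[h'.+2.-1]/h'.+1 -addn1 nseqD -!catA.
have blocksS' n : blocks h k n.+1 = (blocks h k n ++ [:: la; lb]) ++ nseq h.-1 la ++ nseq k.-1 lb.
  by rewrite blocksS -catA.
rewrite blocksS' => H; have k1 : k.-1 < k by lia.
have [u [z1 [r [r_le Ei Ez H1]]]] := shuffle_guarded_tail k1 gz H.
case: i H Ei => [|i] H Ei; first by have := congr1 size Ei; rewrite /blocks /= !size_cat !size_nseq; lia.
move: Ei; rewrite blocksS' !split_last_a => /cat_a_nseq_b_inj [/catIs Eu Er].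
have r0 : r = 0 by lia.
rewrite r0 cats0 in Ez; rewrite -{}Eu -{}Ez in H1.
have [u' [z2 [r' [r'_le Eu' Ez' H2]]]] :=
  shuffle_guarded_tail (p := 1) (q := 1) k2 gz H1.
have [Eu2 Er'] := cat_a_nseq_b_inj (m := 1) (n := 1 - r') Eu'.
exists i => //; rewrite Ez' (_ : r' = 0) ?cats0 ?Eu2 //; lia.
Qed.

Lemma blocks_no_shuffle h k i j z : 2 <= h -> 2 <= k -> guarded k z -> i < j ->
  ~ shuffle (blocks h k i) z (blocks h k j).
Proof.
move=> h2 k2 gz; elim: j i => [|j IH] i // ij.
by case/(shuffle_blocks_last h2 k2 gz) => i' Ei; apply: IH; rewrite -ltnS -Ei.
Qed.

Lemma count_Sn_core h k n : 0 < h -> 0 < k ->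
  na (Sn_core h k n) = n.+2 * h /\ nb (Sn_core h k n) = n.+2 * k.
Proof.
move=> h0 k0; have [Ba Bb] := count_blocks n h0 k0.
by rewrite /Sn_core !count_cat !count_nseq Ba Bb /=; lia.
Qed.

Lemma shuffle_Sn_core h k i j z : 0 < h -> 0 < k -> prefix_balanced h k z ->
  shuffle (Sn h k i) z (Sn h k j) -> shuffle (Sn_core h k i) z (Sn_core h k j).
Proof.
move=> h0 k0 bz; have [Ca Cb] := count_Sn_core i h0 k0.
rewrite !Sn_eq => /shuffle_split_left [x1 [x2 [z1 [z2 [Ex Ez H1 H2]]]]].
have [sx1 | sx2] : size x1 = 3 * h \/ size x2 = 3 * k.
- apply: (@Sn_prefix_peak h k j) => //; first by rewrite Sn_eq Ex.
  have [-> ->] := shuffle_count_ab H1; have := bz _ _ Ez.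
  by rewrite !count_nseq /=; nia.
- have z1_nil : z1 = [::].
    by apply: size0nil; have := shuffle_size H1; rewrite size_nseq sx1; lia.
  rewrite {}z1_nil /= in Ez H1; rewrite -{}Ez in H2.
  move: Ex; rewrite -(shuffles0_eq H1) => /catsI Ex.
  have /shuffle_split_left [y1 [y2 [w1 [w2 [Ey Ew H3 H4]]]]] := H2.
  have [sy1 | sy2] : size (nseq (3 * h) la ++ y1) = 3 * h \/ size y2 = 3 * k.
  + apply: (@Sn_prefix_peak h k j) => //; first by rewrite Sn_eq Ex Ey catA.
    have [Ay By] := shuffle_count_ab H3; have := bz _ _ Ew.
    by rewrite !count_cat !count_nseq Ay By Ca Cb /=; nia.
  + have := shuffle_size H3; rewrite size_cat size_nseq in sy1.
    by rewrite /Sn_core !size_cat size_nseq; lia.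
  have w2_nil : w2 = [::].
    by apply: size0nil; have := shuffle_size H4; rewrite size_nseq sy2; lia.
  rewrite {}w2_nil cats0 in Ew H4; rewrite {}Ew.
  by move: Ex; rewrite Ey -(shuffles0_eq H4) => /catIs ->.
- have := shuffle_size H2; rewrite sx2 /Sn_core !size_cat !size_nseq; lia.
Qed.

Lemma Sn_no_shuffle h k i j z : 2 <= h -> 2 <= k -> i < j -> admissible h k z ->
  ~ shuffle (Sn h k i) z (Sn h k j).
Proof.
move=> h2 k2 ij [gz bz] /shuffle_Sn_core-/(_ (ltnW h2) (ltnW k2) bz).
move=> /(shuffle_strip_b_prefix (ltnW h2) bz).
have := @shuffle_guarded_tail k (2 * h) 0 (blocks h k j) _ z (ltnW k2) gz.
rewrite cats0 => /[apply] -[u [z1 [r [r0 Eu Ez H]]]].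
move: r0 Eu Ez H; rewrite leqn0 => /eqP-> /=; rewrite !cats0 => /catIs <- <-.
exact: blocks_no_shuffle.
Qed.

Lemma derives_pw_of_pieces h k v x (p : seq (word * word)) : 0 < size p ->
  v = flatten (map fst p) -> pw h k = flatten (map snd p) ->
  x = flatten [seq y.1 ++ y.2 | y <- p] -> derives [:: pw h k] v x.
Proof. by move=> *; exists (pw h k); split; [rewrite inE | exists p]. Qed.

Lemma derives_star_lstep (I : seq word) v y x :
  derives I v y -> derives_star I y x -> derives_star I v x.
Proof. by move=> Hvy Hyx; apply: rt_trans (rt_step _ _ _ _ Hvy) Hyx. Qed.

Lemma cons_nseq1 (c : letter) s : c :: s = nseq 1 c ++ s.
Proof. by []. Qed.

Lemma nseq_merge (c : letter) m n s : nseq m c ++ nseq n c ++ s = nseq (m + n) c ++ s.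
Proof. by rewrite nseqD catA. Qed.

Ltac merge_runs :=
  rewrite /= ?cats0 -?catA ?cons_nseq1 -?catA ?nseq_merge -?nseqD ?cats0.

Ltac match_runs := repeat (first [reflexivity | congr (_ ++ _) | congr nseq]); lia.

(* One more copy of w, interleaved around the lone b, turns that b into a new
   block a b a^{h-1} b^{k-1}, and either recreates the lone b after it
   ([derives_pre_SnS]) or merges it into the final b^{3k} ([derives_pre_Sn_Sn]). *)
Definition pre_Sn h k m : word :=
  nseq (3 * h) la ++ nseq (2 * k) lb ++ blocks h k m ++
  lb :: nseq (2 * h) la ++ nseq (3 * k - 1) lb.

Lemma L_eps_pre_Sn0 h k : 0 < h -> 0 < k -> L_eps [:: pw h k] (pre_Sn h k 0).
Proof.
move=> h0 k0; set W1 : word := nseq (2 * h) la ++ nseq (2 * k) lb.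
apply: (@derives_star_lstep _ _ (pw h k)).
  by apply: (@derives_pw_of_pieces _ _ _ _ [:: ([::], pw h k)]) => //=; rewrite cats0.
apply: (@derives_star_lstep _ _ W1).
  apply: (@derives_pw_of_pieces _ _ _ _ [:: (nseq h la, nseq h la); (nseq k lb, nseq k lb)]) => //;
    rewrite /W1 /pw; merge_runs; match_runs.
apply: (@derives_star_lstep _ _ (pw h k ++ W1)).
  by apply: (@derives_pw_of_pieces _ _ _ _ [:: ([::], pw h k); (W1, [::])]) => //=; rewrite !cats0.
apply: (@derives_star_lstep _ _
  (nseq (2 * h) la ++ nseq k.+1 lb ++ nseq (2 * h) la ++ nseq (3 * k - 1) lb)).
  apply: (@derives_pw_of_pieces _ _ _ _ [:: (nseq h la, nseq h la); (nseq k lb, [:: lb]);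
     (nseq (2 * h) la, [::]); (nseq (2 * k) lb, nseq (k - 1) lb)]) => //;
    rewrite /W1 /pw; merge_runs; match_runs.
apply: rt_step.
apply: (@derives_pw_of_pieces _ _ _ _ [:: (nseq (2 * h) la, nseq h la); (nseq k.+1 lb, nseq k lb);
   (nseq (2 * h) la ++ nseq (3 * k - 1) lb, [::])]) => //;
  rewrite /pre_Sn /blocks /pw; merge_runs; match_runs.
Qed.

Lemma derives_pre_SnS h k m : 0 < h -> 0 < k ->
  derives [:: pw h k] (pre_Sn h k m) (pre_Sn h k m.+1).
Proof.
move=> h0 k0.
apply: (@derives_pw_of_pieces _ _ _ _
  [:: (nseq (3 * h) la ++ nseq (2 * k) lb ++ blocks h k m, [:: la]);
      ([:: lb], nseq h.-1 la ++ nseq k.-1 lb ++ [:: lb]);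
      (nseq (2 * h) la ++ nseq (3 * k - 1) lb, [::])]) => //;
  rewrite /pre_Sn ?blocksS /block /pw; merge_runs; match_runs.
Qed.

Lemma derives_pre_Sn_Sn h k m : 0 < h -> 0 < k ->
  derives [:: pw h k] (pre_Sn h k m) (Sn h k m.+1).
Proof.
move=> h0 k0.
apply: (@derives_pw_of_pieces _ _ _ _
  [:: (nseq (3 * h) la ++ nseq (2 * k) lb ++ blocks h k m, [:: la]);
      ([:: lb], nseq h.-1 la ++ nseq k.-1 lb);
      (nseq (2 * h) la, [:: lb]); (nseq (3 * k - 1) lb, [::])]) => //;
  rewrite ?Sn_eq /Sn_core /pre_Sn ?blocksS /block /pw; merge_runs; match_runs.
Qed.

Lemma L_eps_Sn h k n : 0 < h -> 0 < k -> 0 < n -> L_eps [:: pw h k] (Sn h k n).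
Proof.
move=> h0 k0; case: n => // m _.
have pre : forall m, L_eps [:: pw h k] (pre_Sn h k m).
  elim=> [|{}m IH]; first exact: L_eps_pre_Sn0.
  exact: rt_trans IH (rt_step _ _ _ _ (derives_pre_SnS m h0 k0)).
exact: rt_trans (pre m) (rt_step _ _ _ _ (derives_pre_Sn_Sn m h0 k0)).
Qed.

Theorem proposition1 (h k : nat) (hh : (2 <= h)%N) (hk : (2 <= k)%N) :
  (forall n, (1 <= n)%N -> L_eps [:: pw h k] (Sn h k n)) /\
  (forall i j, (1 <= i)%N -> (i < j)%N ->
     ~ derives_star [:: pw h k] (Sn h k i) (Sn h k j)) /\
  ~ wqo_on (L_eps [:: pw h k]) (derives_star [:: pw h k]).
Proof.
have h0 : 0 < h by apply: ltnW.
have k0 : 0 < k by apply: ltnW.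
have derivable n : 1 <= n -> L_eps [:: pw h k] (Sn h k n) by apply: L_eps_Sn.
have incomparable i j : 1 <= i -> i < j -> ~ derives_star [:: pw h k] (Sn h k i) (Sn h k j).
  move=> _ ij /(derives_star_shuffle (h := h) (k := k)) [].
    by move=> u; rewrite inE => /eqP ->; apply: admissible_pw.
  by move=> z /(Sn_no_shuffle hh hk ij).
split=> //; split=> // -[_ [_ wqo]].
have [i [j [ij]]] := wqo (fun n => Sn h k n.+1) (fun n => derivable n.+1 erefl).
exact: incomparable.
Qed.
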